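(* Let $\Lambda$ be an artin algebra and let $f: X\to Y$ and $f': X'\to Y$ be epimorphisms of $\Lambda$-modules with $f=f'h$ for some $h: X\to X'$. Let $K=\operatorname{Ker} f$, $K'=\operatorname{Ker} f'$ and let $h': K\to K'$ be the restriction of $h$, so that there is a commutative diagram with exact rows $0\to K\to X\to Y\to 0$ and $0\to K'\to X'\to Y\to 0$ with vertical maps $h', h, 1_Y$. If $f$ is right minimal and $h'$ is a split epimorphism, then $f'$ is right minimal.
   Context: Modules are finite length left $\Lambda$-modules. A map $g: X\to Y$ is right minimal if there is no nonzero direct summand $X''$ of $X$ with $g(X'')=0$. *)

From HB Require Import structures.
From mathcomp Require Import all_boot all_order all_algebra.
Set Implicit Arguments. Unset Strict Implicit. Unset Printing Implicit Defensive.
Import GRing.Theory.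
Local Open Scope ring_scope.

Definition is_ideal (R : comNzRingType) (I : {pred R}) : Prop :=
  [/\ 0 \in I, (forall x y, x \in I -> y \in I -> x + y \in I)
    & (forall r x, x \in I -> r * x \in I)].

Definition artinian_ring (R : comNzRingType) : Prop :=
  forall I : nat -> {pred R}, (forall n, is_ideal (I n)) ->
    (forall n, {subset I n.+1 <= I n}) ->
    exists N, forall n, (N <= n)%N -> I n =i I N.

Definition artin_algebra (R : comNzRingType) (Lam : algType R) : Prop :=
  artinian_ring R /\
  exists s : seq Lam, forall x : Lam,
    exists c : 'I_(size s) -> R, x = \sum_(i < size s) c i *: s`_i.

Definition submodule (Lam : pzRingType) (M : lmodType Lam) (S : {pred M}) : Prop :=
  [/\ 0 \in S, (forall x y, x \in S -> y \in S -> x + y \in S)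
    & (forall (a : Lam) x, x \in S -> a *: x \in S)].

Definition finite_length (Lam : pzRingType) (M : lmodType Lam) : Prop :=
  exists n : nat, forall (m : nat) (S : nat -> {pred M}),
    (forall i, submodule (S i)) ->
    (forall i, (i < m)%N -> {subset S i <= S i.+1} /\ exists x, x \in S i.+1 /\ x \notin S i) ->
    (m <= n)%N.

Definition direct_summand (Lam : pzRingType) (M : lmodType Lam) (S : {pred M}) : Prop :=
  submodule S /\ exists T : {pred M}, [/\ submodule T,
    (forall x, x \in S -> x \in T -> x = 0)
    & (forall x, exists s t, [/\ s \in S, t \in T & x = s + t])].

Definition right_minimal (Lam : pzRingType) (X Y : lmodType Lam) (g : X -> Y) : Prop :=
  forall S : {pred X}, direct_summand S -> (forall x, x \in S -> g x = 0) ->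
    forall x, x \in S -> x = 0.

(* If S' is a direct summand of X' killed by f', then S' lies in Ker f', so
   the section s of h' maps it isomorphically onto s(S') <= Ker f.  The
   preimage under h of a complement of S' is a complement of s(S') in X, so
   f kills the direct summand s(S'); right minimality of f forces s(S') = 0,
   and S' = h(s(S')) = 0. *)
From HB Require Import structures.
From mathcomp Require Import all_boot all_order all_algebra.
Set Implicit Arguments.
Unset Strict Implicit.
Unset Printing Implicit Defensive.
Import GRing.Theory.
Local Open Scope ring_scope.

Lemma submodule_preim (Lam : pzRingType) (M N : lmodType Lam)
    (g : {linear M -> N}) (T : {pred N}) :
  submodule T -> submodule (fun x => g x \in T).
Proof.
case=> T0 TD TZ; split=> [|x y|a x]; rewrite !unfold_in ?linear0 //.
  by rewrite linearD; apply: TD.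
by rewrite linearZ; apply: TZ.
Qed.

Section SectionImage.

Variables (Lam : pzRingType) (X X' : lmodType Lam).
Variables (h : {linear X -> X'}) (s : X' -> X) (S' : {pred X'}).

(* The image s(S'), described without choice: since h undoes s on S', a
   vector x lies in s(S') exactly when h x lies in S' and s recovers x. *)
Definition section_image : {pred X} := [pred x | (h x \in S') && (x == s (h x))].

Hypothesis hsK : forall k, k \in S' -> h (s k) = k.

Lemma section_imageP x : reflect (exists2 k, k \in S' & x = s k) (x \in section_image).
Proof.
apply: (iffP andP) => [[hxS /eqP xE] | [k kS ->]]; first by exists (h x).
by rewrite hsK // kS.
Qed.

Lemma mem_section_image k : k \in S' -> s k \in section_image.
Proof. by move=> kS; apply/section_imageP; exists k. Qed.

Hypothesis sD : forall k1 k2, k1 \in S' -> k2 \in S' -> s (k1 + k2) = s k1 + s k2.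
Hypothesis sZ : forall (a : Lam) k, k \in S' -> s (a *: k) = a *: s k.

Lemma direct_summand_section_image :
  direct_summand S' -> direct_summand section_image.
Proof.
case=> [[S0 SD SZ] [T' [subT' ST0 STspan]]].
have s0 : s 0 = 0 by have := sZ 0 S0; rewrite !scale0r.
split.
  split=> [|_ _ /section_imageP[k1 k1S ->] /section_imageP[k2 k2S ->]
            | a _ /section_imageP[k kS ->]].
  - by rewrite -s0 mem_section_image.
  - by rewrite -sD // mem_section_image // SD.
  - by rewrite -sZ // mem_section_image // SZ.
exists (fun x => h x \in T'); split; first exact: submodule_preim.
  move=> _ /section_imageP[k kS ->]; rewrite unfold_in hsK // => kT.
  by rewrite (ST0 k kS kT).
move=> x; have [k [t [kS tT hxE]]] := STspan (h x).
exists (s k), (x - s k); split; first exact: mem_section_image.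
  by rewrite unfold_in linearB hsK // hxE addrC addKr.
by rewrite addrC subrK.
Qed.

End SectionImage.

Lemma right_minimal_of_split_kernel (Lam : pzRingType) (X X' Y : lmodType Lam)
    (f : {linear X -> Y}) (f' : {linear X' -> Y}) (h : {linear X -> X'})
    (s : X' -> X) :
  right_minimal f ->
  (forall k, f' k = 0 -> f (s k) = 0) ->
  (forall k1 k2, f' k1 = 0 -> f' k2 = 0 -> s (k1 + k2) = s k1 + s k2) ->
  (forall (a : Lam) k, f' k = 0 -> s (a *: k) = a *: s k) ->
  (forall k, f' k = 0 -> h (s k) = k) ->
  right_minimal f'.
Proof.
move=> minf sK sD sZ hsK S' S'summand f'S' x xS.
have hsK' k : k \in S' -> h (s k) = k by move/f'S'; apply: hsK.
have image0 : forall y, y \in section_image h s S' -> y = 0.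
  apply: minf => [|_ /section_imageP[//|k kS ->]]; last exact/sK/f'S'.
  by apply: direct_summand_section_image => // [k1 k2|a k] *; rewrite ?sD ?sZ ?f'S'.
by rewrite -(hsK' x xS) (image0 _ (mem_section_image hsK' xS)) linear0.
Qed.

Theorem lemma7p2 (R : comNzRingType) (Lam : algType R)
  (X X' Y : lmodType Lam)
  (f : {linear X -> Y}) (f' : {linear X' -> Y}) (h : {linear X -> X'}) :
  artin_algebra Lam ->
  finite_length X -> finite_length X' -> finite_length Y ->
  (forall y, exists x, f x = y) ->
  (forall y, exists x', f' x' = y) ->
  (forall x, f x = f' (h x)) ->
  right_minimal f ->
  (* h' : Ker f -> Ker f' (restriction of h) is a split epimorphism:
     there is a module map s : Ker f' -> Ker f with h' \o s = 1 *)
  (exists s : X' -> X,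
     [/\ (forall k, f' k = 0 -> f (s k) = 0),
         (forall k1 k2, f' k1 = 0 -> f' k2 = 0 -> s (k1 + k2) = s k1 + s k2),
         (forall (a : Lam) k, f' k = 0 -> s (a *: k) = a *: s k)
       & (forall k, f' k = 0 -> h (s k) = k)]) ->
  right_minimal f'.
Proof.
move=> _ _ _ _ _ _ _ minf [s [sK sD sZ hsK]].
exact: (right_minimal_of_split_kernel minf sK sD sZ hsK).
Qed.
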